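(* Let $V$ be a finite-dimensional real vector space, $\sigma\subset V$ a strictly convex polyhedral cone, $\tau$ a face of $\sigma$, and $P\colon V\to V/\mathrm{lin}(\tau)$ the projection. If $\sigma=\sigma_1\cup\dots\cup\sigma_r$ with polyhedral cones $\sigma_i$, then $P(\sigma)$ is the union of all $P(\sigma_i)$ for which $\tau^{\circ}\cap\sigma_i\neq\emptyset$.
   Context: $\mathrm{lin}(\tau)$ is the linear span of $\tau$ and $\tau^{\circ}$ its relative interior. *)

From HB Require Import structures.
From mathcomp Require Import all_boot all_order all_algebra.
From mathcomp Require Import boolp classical_sets reals.
Set Implicit Arguments. Unset Strict Implicit. Unset Printing Implicit Defensive.
Import Order.TTheory GRing.Theory Num.Theory.
Local Open Scope ring_scope.
Local Open Scope classical_set_scope.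

Section Cones.
Variables (R : realType) (n : nat).
Notation V := 'rV[R]_n.

Definition dotv (u x : V) : R := (u *m x^T) 0 0.

Definition cone_gen (s : seq V) : set V :=
  [set x | exists c : 'I_(size s) -> R,
     (forall i, 0 <= c i) /\ x = \sum_(i < size s) c i *: s`_i].

Definition polyhedral_cone (C : set V) : Prop := exists s : seq V, C = cone_gen s.

Definition strictly_convex (C : set V) : Prop :=
  forall x, C x -> C (- x) -> x = 0.

Definition face_of (tau sigma : set V) : Prop :=
  exists u : V, (forall x, sigma x -> 0 <= dotv u x) /\
    tau = [set x | sigma x /\ dotv u x = 0].

Definition lin (A : set V) : set V :=
  [set x | exists (s : seq V) (c : 'I_(size s) -> R),
     (forall i : 'I_(size s), A s`_i) /\ x = \sum_(i < size s) c i *: s`_i].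

Definition relint (A : set V) : set V :=
  [set x | A x /\ exists e : R, 0 < e /\
     forall y, lin A y -> (forall j, `|y 0 j - x 0 j| < e) -> A y].

(* P : V -> V / L the quotient projection; P x = P y iff x - y ∈ L.
   proj_preimage L A = P^{-1}(P(A)) = A + L. *)
Definition proj_preimage (L A : set V) : set V :=
  [set x | exists y, A y /\ L (x - y)].

End Cones.

From HB Require Import structures.
From mathcomp Require Import all_boot all_order all_algebra.
From mathcomp Require Import boolp classical_sets reals.
From mathcomp Require Import ring lra.
Import Order.TTheory GRing.Theory Num.Theory.
Set Implicit Arguments. Unset Strict Implicit. Unset Printing Implicit Defensive.
Local Open Scope ring_scope.
Local Open Scope classical_set_scope.

(* Represent σ and the σ_i as the cones spanned by the rows of matrices, and
   τ = σ ∩ u^⊥ as the cone spanned by the rows of σ's matrix lying in u^⊥.  The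
   sum t of these rows lies in τ°: a point of lin τ close to t is a combination
   of the rows with coefficients close to 1.  Given y ∈ σ, the point t + d y
   lies in some σ_i for any d > 0; dropping from its representation the
   generators of σ_i outside u^⊥ leaves a point a ∈ σ_i ∩ τ, and the dropped
   part is bounded by a constant times u·(t + d y) = d u·y.  That constant is
   uniform in i, so d can be chosen before i so small that a ∈ τ°.  Finally
   y ≡ (t + d y)/d ∈ σ_i modulo lin τ. *)

Lemma ler_sum_term (R : numDomainType) (I : finType) (F : I -> R) j :
  (forall i, 0 <= F i) -> F j <= \sum_i F i.
Proof. by move=> F0; rewrite (bigD1 j) //= lerDl sumr_ge0. Qed.

Section Cones.
Variables (R : realType) (n : nat).
Local Notation V := 'rV[R]_n.

Lemma dotv_is_linear (u : V) : linear_for *%R (dotv u).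
Proof. by move=> a x y; rewrite /dotv linearD linearZ /= mulmxDr -scalemxAr !mxE. Qed.

HB.instance Definition _ (u : V) :=
  GRing.isLinear.Build R V R *%R (dotv u) (dotv_is_linear u).

Lemma dotv_mulmx (u : V) m (c : 'rV[R]_m) (G : 'M[R]_(m, n)) :
  dotv u (c *m G) = \sum_j c 0 j * dotv u (row j G).
Proof.
by rewrite mulmx_sum_row linear_sum; apply: eq_bigr => j _; rewrite linearZ.
Qed.

Lemma lin_sum (A : set V) k (f : 'I_k -> V) (c : 'I_k -> R) :
  (forall i, A (f i)) -> lin A (\sum_(i < k) c i *: f i).
Proof.
move=> Af; exists (map f (enum 'I_k)).
have Hs : size (map f (enum 'I_k)) = k by rewrite size_map size_enum_ord.
have Hn (i : 'I_k) : (map f (enum 'I_k))`_i = f i.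
  by rewrite (nth_map i) ?nth_ord_enum // size_enum_ord.
move: (map f (enum 'I_k)) Hs Hn => s Hs Hn; subst k.
exists c; split; first by move=> i; rewrite Hn.
by apply: eq_bigr => i _; rewrite Hn.
Qed.

Lemma relint_nbhs (A : set V) (t : V) (e : R) : 0 < e ->
  (forall y, lin A y -> (forall k, `|y 0 k - t 0 k| < e) -> A y) ->
  forall a, A a -> (forall k, `|a 0 k - t 0 k| < e / 2) -> relint A a.
Proof.
move=> e0 At a Aa a_t; split => //; exists (e / 2); split => [|y Ay ya]; first lra.
apply: At => // k; have := ler_distD (a 0 k) (y 0 k) (t 0 k).
by have := a_t k; have := ya k; lra.
Qed.

Lemma proj_preimageS (L A B : set V) :
  A `<=` B -> proj_preimage L A `<=` proj_preimage L B.
Proof. by move=> AB x [y [Ay Lxy]]; exists y; split => //; exact: AB. Qed.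

Definition cone_mx m (G : 'M[R]_(m, n)) : set V :=
  [set x | exists2 c : 'rV[R]_m, (forall j, 0 <= c 0 j) & x = c *m G].

Lemma cone_gen_mx (s : seq V) :
  cone_gen s = cone_mx (\matrix_(i < size s) s`_i).
Proof.
apply/seteqP; split => x.
  move=> [c [c0 ->]]; exists (\row_i c i) => [j|]; first by rewrite mxE.
  by rewrite mulmx_sum_row; apply: eq_bigr => i _; rewrite rowK mxE.
move=> [c c0 ->]; exists (fun i => c 0 i); split => //.
by rewrite mulmx_sum_row; apply: eq_bigr => i _; rewrite rowK.
Qed.

Definition sum_rows m (G : 'M[R]_(m, n)) : V := const_mx 1 *m G.

Definition face_mx (u : V) m (G : 'M[R]_(m, n)) : 'M[R]_(m, n) :=
  \matrix_j (if dotv u (row j G) == 0 then row j G else 0).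

(* Rows in u^⊥ contribute nothing, since x / 0 = 0. *)
Definition slope (u : V) m (G : 'M[R]_(m, n)) : R :=
  \sum_j \sum_k `|G j k| / dotv u (row j G).

Section ConeMx.
Variables (m : nat) (G : 'M[R]_(m, n)).

Lemma row_cone_mx j : cone_mx G (row j G).
Proof.
exists (delta_mx 0 j) => [k|]; last by rewrite -rowE.
by rewrite mxE; case: (_ && _).
Qed.

Lemma cone_mxD x y : cone_mx G x -> cone_mx G y -> cone_mx G (x + y).
Proof.
move=> [c c0 ->] [d d0 ->]; exists (c + d); last by rewrite mulmxDl.
by move=> j; rewrite mxE addr_ge0.
Qed.

Lemma cone_mxZ a x : 0 <= a -> cone_mx G x -> cone_mx G (a *: x).
Proof.
move=> a0 [c c0 ->]; exists (a *: c); last by rewrite scalemxAl.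
by move=> j; rewrite mxE mulr_ge0.
Qed.

Lemma lin_cone_mx : lin (cone_mx G) = [set y | (y <= G)%MS].
Proof.
apply/seteqP; split => y /=.
  move=> [s [c [sG ->]]]; apply: summx_sub => i _; apply: scalemx_sub.
  by have [w _ ->] := sG i; exact: submxMl.
move=> /submxP [w ->]; rewrite mulmx_sum_row.
by apply: lin_sum => j; exact: row_cone_mx.
Qed.

Lemma cone_mx_nbhs : exists2 e : R, 0 < e & forall y : V, (y <= G)%MS ->
  (forall k, `|y 0 k - sum_rows G 0 k| < e) -> cone_mx G y.
Proof.
(* pinvmx G writes y - sum_rows G as w *m G with w linear in y - sum_rows G,
   so y = (1 + w) *m G has positive coefficients when y is close. *)
pose P := pinvmx G; pose S := \sum_j \sum_k `|P k j|.
have S0 : 0 <= S by apply: sumr_ge0 => j _; apply: sumr_ge0.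
have eS : (1 + S)^-1 * S < 1 by rewrite mulrC ltr_pdivrMr ?mul1r; lra.
exists (1 + S)^-1 => [|y yG yt]; first by rewrite invr_gt0; lra.
set t := sum_rows G; set w := (y - t) *m P.
have ytG : (y - t <= G)%MS.
  by move/submxP: yG => [v ->]; rewrite /t /sum_rows -mulmxBl submxMl.
exists (const_mx 1 + w); last first.
  by rewrite mulmxDl /w mulmxKpV // /t /sum_rows addrC subrK.
move=> j; have wj : `|w 0 j| < 1.
  rewrite mxE; apply: le_lt_trans (ler_norm_sum _ _ _) _; apply: le_lt_trans eS.
  apply: (@le_trans _ _ (\sum_k (1 + S)^-1 * `|P k j|)).
    apply: ler_sum => k _; rewrite normrM ler_wpM2r //.
    by apply: ltW; have := yt k; rewrite !mxE.
  rewrite -mulr_sumr ler_wpM2l ?invr_ge0 //; first lra.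
  rewrite /S; apply: (@ler_sum_term _ _ (fun j => \sum_k `|P k j|) j) => i.
  exact: sumr_ge0.
by move: wj; rewrite ltr_norml !mxE => /andP[+ _]; lra.
Qed.

Section Face.
Variable u : V.
Hypothesis uG : forall j, 0 <= dotv u (row j G).

Lemma dotv_cone_mx_ge0 x : cone_mx G x -> 0 <= dotv u x.
Proof.
by move=> [c c0 ->]; rewrite dotv_mulmx sumr_ge0 // => j _; rewrite mulr_ge0.
Qed.

Lemma face_mxE j k :
  face_mx u G j k = if dotv u (row j G) == 0 then G j k else 0.
Proof. by rewrite mxE; case: ifP; rewrite mxE. Qed.

Lemma face_cone_mx :
  [set x | cone_mx G x /\ dotv u x = 0] = cone_mx (face_mx u G).
Proof.
apply/seteqP; split => x /=.
  move=> [[c c0 ->]]; rewrite dotv_mulmx.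
  move=> /(psumr_eq0P (fun j _ => mulr_ge0 (c0 j) (uG j))) cu0.
  exists c => //; rewrite !mulmx_sum_row; apply: eq_bigr => j _; rewrite rowK.
  case: ifP => // /negbT uj0; have /eqP := cu0 j isT.
  by rewrite mulf_eq0 (negbTE uj0) orbF => /eqP ->; rewrite !scale0r.
move=> [c c0 ->].
pose c' := \row_j (if dotv u (row j G) == 0 then c 0 j else 0).
have -> : c *m face_mx u G = c' *m G.
  rewrite !mulmx_sum_row; apply: eq_bigr => j _.
  by rewrite rowK mxE; case: ifP; rewrite ?scaler0 ?scale0r.
split; first by exists c' => // j; rewrite mxE; case: ifP.
rewrite dotv_mulmx big1 // => j _; rewrite mxE.
by case: ifP => [/eqP ->|]; rewrite ?mulr0 ?mul0r.
Qed.

Lemma slope_ge0 : 0 <= slope u G.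
Proof. by do 2!(apply: sumr_ge0 => ? _); rewrite divr_ge0. Qed.

Lemma face_mx_dist (c : 'rV[R]_m) : (forall j, 0 <= c 0 j) -> forall k,
  `|(c *m G) 0 k - (c *m face_mx u G) 0 k| <= slope u G * dotv u (c *m G).
Proof.
move=> c0 k; rewrite dotv_mulmx mulr_sumr !mxE -sumrB.
apply: le_trans (ler_norm_sum _ _ _) _; apply: ler_sum => j _.
rewrite face_mxE; case: ifP => [/eqP ->|/negbT uj0].
  by rewrite subrr normr0 !mulr0.
have uj : 0 < dotv u (row j G) by rewrite lt_def uj0 uG.
rewrite mulr0 subr0 normrM ger0_norm // mulrCA ler_wpM2l //.
have -> : `|G j k| = `|G j k| / dotv u (row j G) * dotv u (row j G).
  by rewrite divfK // gt_eqF.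
rewrite ler_wpM2r ?uG // /slope.
apply: le_trans (@ler_sum_term _ _ (fun j => \sum_k `|G j k| / dotv u (row j G)) j _).
  by apply: (@ler_sum_term _ _ (fun k => `|G j k| / dotv u (row j G))) => i;
    rewrite divr_ge0 ?uG.
by move=> i; apply: sumr_ge0 => ? _; rewrite divr_ge0 ?uG.
Qed.

End Face.
End ConeMx.

Section Projection.
Variables (m : nat) (G : 'M[R]_(m, n)) (u : V).
Variables (r : nat) (p : 'I_r -> nat) (H : forall i, 'M[R]_(p i, n)).
Hypothesis uG : forall j, 0 <= dotv u (row j G).
Hypothesis cover : cone_mx G = \bigcup_(i in [set: 'I_r]) cone_mx (H i).
Local Notation tau := (cone_mx (face_mx u G)).
Local Notation t := (sum_rows (face_mx u G)).

Lemma dotv_rowH_ge0 i j : 0 <= dotv u (row j (H i)).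
Proof.
by apply: (dotv_cone_mx_ge0 uG); rewrite cover; exists i => //; exact: row_cone_mx.
Qed.

Lemma sum_rows_face : [set x | cone_mx G x /\ dotv u x = 0] t.
Proof. by rewrite (face_cone_mx uG); exists (const_mx 1) => // j; rewrite mxE. Qed.

Let M := \sum_i slope u (H i).

Lemma slope_le_M i : slope u (H i) <= M.
Proof.
apply: (@ler_sum_term _ _ (fun i => slope u (H i)) i) => i'.
exact: slope_ge0 (@dotv_rowH_ge0 i').
Qed.

Lemma face_part_near i (c : 'rV[R]_(p i)) d y :
  (forall j, 0 <= c 0 j) -> 0 <= d -> cone_mx G y -> t + d *: y = c *m H i ->
  forall k, `|(c *m face_mx u (H i)) 0 k - t 0 k| <=
            d * (\sum_k `|y 0 k| + M * dotv u y).
Proof.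
move=> c0 d0 Gy zE k; set a := c *m face_mx u (H i).
have [_ ut0] := sum_rows_face.
have := face_mx_dist (@dotv_rowH_ge0 i) c0 k.
rewrite -zE linearD linearZ /= ut0 add0r.
have -> : (t + d *: y) 0 k = t 0 k + d * y 0 k by rewrite !mxE.
have := ler_wpM2l d0 (@ler_sum_term _ _ (fun k => `|y 0 k|) k (fun _ => normr_ge0 _)).
have := ler_wpM2r (mulr_ge0 d0 (dotv_cone_mx_ge0 uG Gy)) (slope_le_M i).
have := ler_normB (d * y 0 k) (t 0 k + d * y 0 k - a 0 k).
rewrite normrM ger0_norm //.
have -> : d * y 0 k - (t 0 k + d * y 0 k - a 0 k) = a 0 k - t 0 k by ring.
lra.
Qed.

Lemma cover_meets_relint y : cone_mx G y -> exists2 d, 0 < d &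
  exists2 i, relint tau `&` cone_mx (H i) !=set0 & cone_mx (H i) (t + d *: y).
Proof.
move=> Gy; have [e e0 tau_nbhs] := cone_mx_nbhs (face_mx u G).
set K := \sum_k `|y 0 k| + M * dotv u y.
have K0 : 0 <= K.
  rewrite addr_ge0 ?sumr_ge0 ?mulr_ge0 ?(dotv_cone_mx_ge0 uG Gy) //.
  by apply: sumr_ge0 => i _; exact: slope_ge0 (@dotv_rowH_ge0 i).
pose d := e / 2 / (1 + K).
have d0 : 0 < d by rewrite divr_gt0 //; lra.
have dK : d * K < e / 2.
  have : d * (1 + K) = e / 2 by rewrite /d divfK // gt_eqF //; lra.
  by have := d0; lra.
exists d => //; have [tG _] := sum_rows_face.
have : cone_mx G (t + d *: y).
  by apply: cone_mxD => //; apply: cone_mxZ => //; exact: ltW.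
rewrite {1}cover => -[i _ [c c0 zE]]; exists i; last by exists c.
have [Hia ua0] : [set x | cone_mx (H i) x /\ dotv u x = 0] (c *m face_mx u (H i)).
  by rewrite (face_cone_mx (@dotv_rowH_ge0 i)); exists c.
have tau_a : tau (c *m face_mx u (H i)).
  by rewrite -(face_cone_mx uG); split => //; rewrite cover; exists i.
exists (c *m face_mx u (H i)); split => //.
apply: (relint_nbhs e0 _ tau_a) => [z|k]; first by rewrite lin_cone_mx; exact: tau_nbhs.
by apply: le_lt_trans dK; apply: face_part_near => //; exact: ltW.
Qed.

Lemma proj_preimage_cover :
  proj_preimage (lin tau) (cone_mx G) `<=`
  \bigcup_(i in [set i | relint tau `&` cone_mx (H i) !=set0])
     proj_preimage (lin tau) (cone_mx (H i)).
Proof.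
move=> x [y [Gy]]; rewrite !lin_cone_mx /= => xy.
have [d d0 [i meet Hz]] := cover_meets_relint Gy.
exists i => //; exists (d^-1 *: (t + d *: y)); split.
  by apply: cone_mxZ => //; rewrite invr_ge0 ltW.
rewrite /= scalerDr scalerA mulVf ?gt_eqF // scale1r.
rewrite opprD addrA (addrC x) -addrA addrC -scaleNr.
by apply: addmx_sub xy _; apply: scalemx_sub; exact: submxMl.
Qed.

End Projection.
End Cones.

Theorem lemma1p5 (R : realType) (n : nat) (sigma tau : set 'rV[R]_n)
  (r : nat) (sig : 'I_r -> set 'rV[R]_n) :
  polyhedral_cone sigma -> strictly_convex sigma -> face_of tau sigma ->
  (forall i, polyhedral_cone (sig i)) ->
  sigma = \bigcup_(i in [set: 'I_r]) sig i ->
  proj_preimage (lin tau) sigma =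
  \bigcup_(i in [set i | relint tau `&` sig i !=set0])
     proj_preimage (lin tau) (sig i).
Proof.
move=> [s ->] _ [u [u_dual ->]] /choice[S defsig] cover.
apply/seteqP; split; last first.
  by move=> x [i _]; apply: proj_preimageS; rewrite cover; exact: bigcup_sup.
have uG j : 0 <= dotv u (row j (\matrix_(i < size s) s`_i)).
  by apply: u_dual; rewrite cone_gen_mx; exact: row_cone_mx.
have {}defsig : sig = fun i => cone_mx (\matrix_(j < size (S i)) (S i)`_j).
  by apply: funext => i; rewrite defsig cone_gen_mx.
rewrite defsig cone_gen_mx (face_cone_mx uG) in cover *.
exact: proj_preimage_cover.
Qed.
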